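(* For every $n\ge 1$, the map $\mathcal I^C_{2n}(321)\to 2^{[n]}$, $\pi\mapsto E_\pi$, is a bijection. In particular $|\mathcal I^C_{2n}(321)|=2^n$, and every element of $\mathcal I^C_{2n}(321)$ is uniquely determined by its set of excedances lying in $[n]$.
   Context: $[n]=\{1,\dots,n\}$ and $2^{[n]}$ is the family of all subsets of $[n]$. A permutation $\pi\in\mathcal S_m$ is centrosymmetric if $\pi(i)+\pi(m+1-i)=m+1$ for all $i$; $\mathcal I^C_{m}(321)$ is the set of centrosymmetric involutions in $\mathcal S_m$ avoiding the pattern $321$. An excedance of $\pi$ is a position $i$ with $\pi(i)>i$; $\mathrm{Exc}(\pi)$ is the set of excedances, and for $\pi\in\mathcal I^C_{2n}(321)$, $E_\pi=\mathrm{Exc}(\pi)\cap[n]$. *)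

(* Positions 1..m are encoded 0-indexed as 'I_m. *)
From mathcomp Require Import all_boot all_order all_fingroup.
Set Implicit Arguments. Unset Strict Implicit. Unset Printing Implicit Defensive.

(* pi(i) + pi(m+1-i) = m+1 (1-indexed)  <->  p i + p (m-1-i) = m-1 (0-indexed) *)
Definition centrosymmetric m (p : {perm 'I_m}) : bool :=
  [forall i : 'I_m, val (p i) + val (p (rev_ord i)) == m.-1].

Definition involutionb m (p : {perm 'I_m}) : bool :=
  [forall i : 'I_m, p (p i) == i].

Definition avoids321 m (p : {perm 'I_m}) : bool :=
  ~~ [exists i : 'I_m, exists j : 'I_m, exists k : 'I_m,
        [&& (val i < val j)%N, (val j < val k)%N, (val (p k) < val (p j))%N & (val (p j) < val (p i))%N]].

Definition I321C m : {set {perm 'I_m}} :=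
  [set p : {perm 'I_m} | [&& involutionb p, centrosymmetric p & avoids321 p]].

Definition Exc m (p : {perm 'I_m}) : {set 'I_m} := [set i : 'I_m | (val i < val (p i))%N].

(* E_p = Exc(p) ∩ [n], as a subset of 'I_n (position j+1 <-> j : 'I_n) *)
Definition Epi n (p : {perm 'I_(n + n)}) : {set 'I_n} :=
  [set j : 'I_n | lshift n j \in Exc p].

From mathcomp Require Import all_boot all_order all_fingroup.
From mathcomp Require Import zify.
Set Implicit Arguments. Unset Strict Implicit. Unset Printing Implicit Defensive.

(* A 321-avoiding involution has no nested arcs and no fixed point under an
   arc, so its t-th excedance is matched with its t-th deficiency.
   Uniqueness: if two such centrosymmetric involutions with the same
   excedances in [n] agree below position i, they agree at i; a strictly
   smaller and a strictly larger candidate image would either create a 321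
   pattern or disagree on an excedance, which centrosymmetry transports into
   the first half.
   Existence: scan [n] from left to right, opening an arc at each element of S
   and closing one at any other position while some arc is open (the remaining
   positions are fixed); mirror this to the second half and match the t-th
   opener with the t-th closer. *)

Local Notation mirror_seq m s := (rev (map (fun i => m.-1 - i) s)).

Lemma sorted_ltn_cat (s1 s2 : seq nat) : sorted ltn s1 -> sorted ltn s2 ->
  (forall x y, x \in s1 -> y \in s2 -> x < y) -> sorted ltn (s1 ++ s2).
Proof.
rewrite !(sorted_pairwise ltn_trans) pairwise_cat => -> -> lt12.
by rewrite !andbT; apply/allrelP => x y; apply: lt12.
Qed.

Lemma sorted_ltn_nthE (s : seq nat) i j : sorted ltn s -> i < size s -> j < size s ->
  (nth 0 s i < nth 0 s j) = (i < j).
Proof.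
by move=> s_sorted i_lt j_lt; apply: (Order.POrderTheory.lt_sorted_ltn_nth 0 s_sorted).
Qed.

Lemma sorted_mirror_seq m (s : seq nat) : {in s, forall x, x < m} ->
  sorted ltn s -> sorted ltn (mirror_seq m s).
Proof.
move=> s_lt s_sorted; rewrite rev_sorted.
apply: (homo_sorted_in (e := ltn) (P := fun x => x < m)) => //.
- by move=> x y; rewrite !unfold_in /=; lia.
- by apply/allP => x /s_lt.
Qed.

Lemma mirror_seq_cat m (s1 s2 : seq nat) :
  mirror_seq m (s1 ++ s2) = mirror_seq m s2 ++ mirror_seq m s1.
Proof. by rewrite map_cat rev_cat. Qed.

Lemma mirror_seqK m (s : seq nat) : {in s, forall x, x < m} ->
  mirror_seq m (mirror_seq m s) = s.
Proof.
move=> s_lt; rewrite map_rev revK -map_comp -[RHS]map_id.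
by apply/eq_in_map => x /s_lt /=; lia.
Qed.

Lemma mem_mirror_seq m (s : seq nat) y :
  y \in mirror_seq m s -> exists2 x, x \in s & y = m.-1 - x.
Proof. by rewrite mem_rev => /mapP. Qed.

Lemma mem_mirror_seq_sub m (s : seq nat) i : i < m -> {in s, forall x, x < m} ->
  (m.-1 - i \in mirror_seq m s) = (i \in s).
Proof.
move=> i_lt s_lt; rewrite mem_rev; apply/mapP/idP => [[x x_in e] | i_in]; last by exists i.
have x_lt := s_lt x x_in; rewrite (_ : i = x) //; lia.
Qed.

Lemma mem_mirror_seq_high n (s : seq nat) y : {in s, forall x, x < n} ->
  y \in mirror_seq (n + n) s -> n <= y < n + n.
Proof. by move=> s_lt /mem_mirror_seq [x /s_lt x_lt ->]; lia. Qed.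

Lemma nth_rev_map (f : nat -> nat) (s : seq nat) v : v < size s ->
  nth 0 (rev (map f s)) v = f (nth 0 s (size s - v.+1)).
Proof. by move=> v_lt; rewrite nth_rev size_map // (nth_map 0) //; lia. Qed.

Lemma nth_mirror_seq m (s : seq nat) u : u < size s ->
  nth 0 (mirror_seq m s) (size s - u.+1) = m.-1 - nth 0 s u.
Proof.
move=> u_lt; rewrite nth_rev_map; last by lia.
by congr (_ - nth 0 s _); lia.
Qed.

Lemma count_iota_leq (Q : pred nat) m n : m <= n ->
  count Q (iota 0 m) <= count Q (iota 0 n).
Proof. by move=> le_mn; rewrite -(subnKC le_mn) iotaD count_cat leq_addr. Qed.

Lemma nth_filter_iota_lt (Q : pred nat) n y t : y <= n -> t < count Q (iota 0 n) ->
  (nth 0 (filter Q (iota 0 n)) t < y) = (t < count Q (iota 0 y)).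
Proof.
move=> le_yn; rewrite -(subnKC le_yn) iotaD filter_cat nth_cat size_filter count_cat.
rewrite !add0n => t_lt; case: ifP => [t_low | /negbT].
  have : nth 0 (filter Q (iota 0 y)) t \in filter Q (iota 0 y).
    by rewrite mem_nth // size_filter.
  by rewrite mem_filter mem_iota add0n => /andP [_ /andP [_ ->]].
rewrite -leqNgt => t_high.
have : nth 0 (filter Q (iota y (n - y))) (t - count Q (iota 0 y))
         \in filter Q (iota y (n - y)).
  by rewrite mem_nth // size_filter ltn_subLR.
by rewrite mem_filter mem_iota => /andP [_ /andP [le_y _]]; apply/negbTE; rewrite -leqNgt.
Qed.

Lemma count_iota_nth_filter (Q : pred nat) n u : u < count Q (iota 0 n) ->
  count Q (iota 0 (nth 0 (filter Q (iota 0 n)) u)) = u.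
Proof.
move=> u_lt; set y := nth 0 _ u.
have : y \in filter Q (iota 0 n) by rewrite mem_nth // size_filter.
rewrite mem_filter mem_iota add0n => /andP [Qy /andP [_ y_lt]].
have := nth_filter_iota_lt (ltnW y_lt) u_lt; rewrite -/y ltnn => /esym/negbT.
have := nth_filter_iota_lt y_lt u_lt; rewrite -/y ltnSn -[y.+1]addn1 iotaD count_cat /= Qy.
by lia.
Qed.

(* The arcs xs`_t <-> ds`_t of a 321-avoiding involution of [0, m), whose
   excedances xs and deficiencies ds are listed increasingly; [closers_mirror]
   is centrosymmetry. *)
Record arc_diagram (m : nat) (xs ds : seq nat) : Prop := ArcDiagram {
  openers_sorted : sorted ltn xs;
  closers_sorted : sorted ltn ds;
  size_closers : size xs = size ds;
  openers_lt : {in xs, forall x, x < m};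
  openers_closers_disjoint : forall x, x \in xs -> x \in ds -> False;
  closers_mirror : ds = mirror_seq m xs;
  opener_lt_closer : forall t, t < size xs -> nth 0 xs t < nth 0 ds t;
  no_fixed_under_arc : forall f t, f < m -> f \notin xs -> f \notin ds -> t < size xs ->
    nth 0 xs t < f -> f < nth 0 ds t -> False }.

Definition arc_inv (xs ds : seq nat) (i : nat) : nat :=
  if i \in xs then nth 0 ds (index i xs)
  else if i \in ds then nth 0 xs (index i ds) else i.

Section ArcInvolution.

Variables (m : nat) (xs ds : seq nat).
Hypothesis A : arc_diagram m xs ds.

Lemma arc_inv_opener t : t < size xs -> arc_inv xs ds (nth 0 xs t) = nth 0 ds t.
Proof.
move=> t_lt; rewrite /arc_inv mem_nth // index_uniq //.
by apply: (sorted_uniq ltn_trans ltnn); apply: openers_sorted A.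
Qed.

Lemma arc_inv_closer t : t < size xs -> arc_inv xs ds (nth 0 ds t) = nth 0 xs t.
Proof.
move=> t_lt; have t_ltd : t < size ds by rewrite -(size_closers A).
rewrite /arc_inv mem_nth //; case: ifP => [x_in | _].
  by case: (openers_closers_disjoint A x_in (mem_nth 0 t_ltd)).
rewrite index_uniq //; apply: (sorted_uniq ltn_trans ltnn); apply: closers_sorted A.
Qed.

Lemma arc_inv_fixed i : i \notin xs -> i \notin ds -> arc_inv xs ds i = i.
Proof. by rewrite /arc_inv => /negbTE -> /negbTE ->. Qed.

Lemma nth_closers_mirror u : u < size xs -> nth 0 ds (size xs - u.+1) = m.-1 - nth 0 xs u.
Proof. by move=> u_lt; rewrite (closers_mirror A) nth_mirror_seq. Qed.

Lemma openers_mirror : xs = mirror_seq m ds.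
Proof. by rewrite (closers_mirror A) mirror_seqK //; apply: openers_lt A. Qed.

Lemma nth_openers_mirror u : u < size xs -> nth 0 xs (size xs - u.+1) = m.-1 - nth 0 ds u.
Proof.
by move=> u_lt; rewrite {1}openers_mirror (size_closers A) nth_mirror_seq -?(size_closers A).
Qed.

Lemma closers_lt : {in ds, forall x, x < m}.
Proof.
by move=> x; rewrite (closers_mirror A) => /mem_mirror_seq [y /(openers_lt A) y_lt ->]; lia.
Qed.

Lemma nth_openers_lt t : t < size xs -> nth 0 xs t < m.
Proof. by move=> t_lt; apply: (openers_lt A); rewrite mem_nth. Qed.

Lemma nth_closers_lt t : t < size xs -> nth 0 ds t < m.
Proof. by move=> t_lt; apply: closers_lt; rewrite mem_nth -?(size_closers A). Qed.

Variant arc_inv_spec (i : nat) : bool -> bool -> Prop :=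
  | ArcOpener t of t < size xs & i = nth 0 xs t : arc_inv_spec i true false
  | ArcCloser t of t < size xs & i = nth 0 ds t : arc_inv_spec i false true
  | ArcFixed of i \notin xs & i \notin ds : arc_inv_spec i false false.

Lemma arc_invP i : arc_inv_spec i (i \in xs) (i \in ds).
Proof.
case: (boolP (i \in xs)) => [/(nthP 0) [t t_lt <-] | i_xs].
  have := mem_nth 0 t_lt; case: (boolP (nth 0 xs t \in ds)) => [x_ds x_xs|_ _].
    by case: (openers_closers_disjoint A x_xs x_ds).
  exact: ArcOpener t_lt _.
case: (boolP (i \in ds)) => [/(nthP 0) [t t_lt <-] | i_ds]; last exact: ArcFixed.
have t_ltx : t < size xs by rewrite (size_closers A).
exact: ArcCloser t_ltx _.
Qed.

Lemma arc_inv_lt i : i < m -> arc_inv xs ds i < m.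
Proof.
move=> i_lt; case: (arc_invP i) => [t t_lt -> | t t_lt -> | i_xs i_ds].
- by rewrite arc_inv_opener // nth_closers_lt.
- by rewrite arc_inv_closer // nth_openers_lt.
- by rewrite arc_inv_fixed.
Qed.

Lemma arc_invK i : arc_inv xs ds (arc_inv xs ds i) = i.
Proof.
case: (arc_invP i) => [t t_lt -> | t t_lt -> | i_xs i_ds].
- by rewrite arc_inv_opener // arc_inv_closer.
- by rewrite arc_inv_closer // arc_inv_opener.
- by rewrite !arc_inv_fixed.
Qed.

Lemma arc_inv_exc i : (i < arc_inv xs ds i) = (i \in xs).
Proof.
case: (arc_invP i) => [t t_lt -> | t t_lt -> | i_xs i_ds].
- by rewrite arc_inv_opener // (opener_lt_closer A).
- by rewrite arc_inv_closer // ltnNge ltnW // (opener_lt_closer A).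
- by rewrite arc_inv_fixed // ltnn.
Qed.

Lemma mem_closers_mirror i : i < m -> (m.-1 - i \in ds) = (i \in xs).
Proof. by move=> i_lt; rewrite (closers_mirror A) mem_mirror_seq_sub //; apply: openers_lt A. Qed.

Lemma mem_openers_mirror i : i < m -> (m.-1 - i \in xs) = (i \in ds).
Proof.
move=> i_lt; rewrite -(mem_closers_mirror (_ : m.-1 - i < m)); last by lia.
by rewrite (_ : m.-1 - (m.-1 - i) = i) //; lia.
Qed.

Lemma arc_inv_mirror i : i < m -> arc_inv xs ds (m.-1 - i) = m.-1 - arc_inv xs ds i.
Proof.
move=> i_lt; have rev_lt t : t < size xs -> size xs - t.+1 < size xs by lia.
case: (arc_invP i) => [t t_lt -> | t t_lt -> | i_xs i_ds].
- rewrite arc_inv_opener // -nth_closers_mirror // arc_inv_closer ?rev_lt //.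
  exact: nth_openers_mirror.
- rewrite arc_inv_closer // -nth_openers_mirror // arc_inv_opener ?rev_lt //.
  exact: nth_closers_mirror.
- by rewrite !arc_inv_fixed ?mem_openers_mirror ?mem_closers_mirror.
Qed.

Lemma arc_inv_openers_homo a b : a \in xs -> b \in xs -> a < b ->
  arc_inv xs ds a < arc_inv xs ds b.
Proof.
move=> /(nthP 0) [s s_lt <-] /(nthP 0) [t t_lt <-].
have size_ds := size_closers A.
by rewrite !arc_inv_opener // !sorted_ltn_nthE -?size_ds ?(openers_sorted A) ?(closers_sorted A).
Qed.

Lemma arc_inv_nonopeners_homo a b : a \notin xs -> b \notin xs -> a < b ->
  arc_inv xs ds a < arc_inv xs ds b.
Proof.
case: (arc_invP a) => [// | s s_lt -> | a_xs a_ds];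
  case: (arc_invP b) => [// | t t_lt -> | b_xs b_ds] _ _ ab.
- rewrite !arc_inv_closer // sorted_ltn_nthE ?(openers_sorted A) //.
  by move: ab; rewrite sorted_ltn_nthE -?(size_closers A) ?(closers_sorted A).
- rewrite arc_inv_closer // (arc_inv_fixed b_xs b_ds).
  exact: ltn_trans (opener_lt_closer A s_lt) ab.
- rewrite arc_inv_closer // (arc_inv_fixed a_xs a_ds) ltnNge; apply/negP => le_xa.
  have ne_xa : nth 0 xs t != a by apply: contraNneq a_xs => <-; rewrite mem_nth.
  apply: (no_fixed_under_arc A _ a_xs a_ds t_lt) => //.
    exact: ltn_trans ab (nth_closers_lt t_lt).
  by rewrite ltn_neqAle ne_xa.
- by rewrite !arc_inv_fixed.
Qed.

Lemma arc_inv_avoids321 i j k : i < j -> j < k ->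
  arc_inv xs ds k < arc_inv xs ds j -> arc_inv xs ds j < arc_inv xs ds i -> False.
Proof.
move=> ij jk.
have ik := ltn_trans ij jk.
have homo a b := @arc_inv_openers_homo a b; have nhomo a b := @arc_inv_nonopeners_homo a b.
case: (boolP (j \in xs)) => j_xs.
- case: (boolP (i \in xs)) => i_xs; first by have := homo _ _ i_xs j_xs ij; lia.
  case: (boolP (k \in xs)) => k_xs; first by have := homo _ _ j_xs k_xs jk; lia.
  by have := nhomo _ _ i_xs k_xs ik; lia.
- case: (boolP (i \in xs)) => i_xs; last by have := nhomo _ _ i_xs j_xs ij; lia.
  case: (boolP (k \in xs)) => k_xs; last by have := nhomo _ _ j_xs k_xs jk; lia.
  by have := homo _ _ i_xs k_xs ik; lia.
Qed.

End ArcInvolution.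

Section BalancedArcs.

Variable P : pred nat.

(* Number of currently open arcs when scanning positions [0, i) left to right:
   a position of [P] opens an arc, any other position closes one if some is open. *)
Fixpoint balance (i : nat) : nat :=
  if i is k.+1 then (if P k then (balance k).+1 else (balance k).-1) else 0.

Definition closes (i : nat) : bool := ~~ P i && (0 < balance i).

Lemma count_balance i : count P (iota 0 i) = balance i + count closes (iota 0 i).
Proof.
elim: i => [|i IH] //.
rewrite -addn1 iotaD !count_cat add0n /= IH /closes addn0 addn1 /=.
by case: (P i) => /=; [lia | case: (balance i) => /= [|k]; lia].
Qed.

Lemma count_closes_leq i : count closes (iota 0 i) <= count P (iota 0 i).
Proof. by rewrite count_balance leq_addl. Qed.

Variable n : nat.

Definition low_openers : seq nat := filter P (iota 0 n).
Definition low_closers : seq nat := filter closes (iota 0 n).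
Definition balanced_openers : seq nat := low_openers ++ mirror_seq (n + n) low_closers.
Definition balanced_closers : seq nat := low_closers ++ mirror_seq (n + n) low_openers.

Lemma mem_low_openers x : (x \in low_openers) = P x && (x < n).
Proof. by rewrite mem_filter mem_iota. Qed.

Lemma mem_low_closers x : (x \in low_closers) = closes x && (x < n).
Proof. by rewrite mem_filter mem_iota. Qed.

Lemma low_openers_closers_disjoint x : x \in low_openers -> x \in low_closers -> False.
Proof. by rewrite mem_low_openers mem_low_closers /closes => /andP [-> _]. Qed.

Lemma low_openers_lt : {in low_openers, forall x, x < n}.
Proof. by move=> x; rewrite mem_low_openers => /andP []. Qed.

Lemma low_closers_lt : {in low_closers, forall x, x < n}.
Proof. by move=> x; rewrite mem_low_closers => /andP []. Qed.

Lemma balanced_openers_lt : {in balanced_openers, forall x, x < n + n}.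
Proof.
move=> x; rewrite mem_cat => /orP [/low_openers_lt | /(mem_mirror_seq_high low_closers_lt)];
  lia.
Qed.

Lemma balanced_closers_lt : {in balanced_closers, forall x, x < n + n}.
Proof.
move=> x; rewrite mem_cat => /orP [/low_closers_lt | /(mem_mirror_seq_high low_openers_lt)];
  lia.
Qed.

Lemma balanced_closers_mirror : balanced_closers = mirror_seq (n + n) balanced_openers.
Proof.
rewrite /balanced_openers /balanced_closers mirror_seq_cat mirror_seqK // => x /low_closers_lt; lia.
Qed.

Lemma balanced_openers_mirror : balanced_openers = mirror_seq (n + n) balanced_closers.
Proof. by rewrite balanced_closers_mirror mirror_seqK //; exact: balanced_openers_lt. Qed.

Lemma size_balanced_closers : size balanced_openers = size balanced_closers.
Proof. by rewrite !size_cat !size_rev !size_map addnC. Qed.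

Lemma sorted_low_openers : sorted ltn low_openers.
Proof. exact: sorted_filter ltn_trans _ _ (iota_ltn_sorted 0 n). Qed.

Lemma sorted_low_closers : sorted ltn low_closers.
Proof. exact: sorted_filter ltn_trans _ _ (iota_ltn_sorted 0 n). Qed.

(* The balance is positive at a closing position, so more openers than closers precede it. *)
Lemma nth_low_opener_lt_closer u : u < size low_closers ->
  nth 0 low_openers u < nth 0 low_closers u.
Proof.
rewrite size_filter => u_lt; set y := nth 0 low_closers u.
have : y \in low_closers by rewrite mem_nth // size_filter.
rewrite mem_low_closers => /andP [/andP [_ bal_y] y_lt].
have u_ltP : u < count P (iota 0 n) by apply: leq_trans u_lt (count_closes_leq n).
rewrite (nth_filter_iota_lt (ltnW y_lt) u_ltP) count_balance.
by rewrite count_iota_nth_filter //; lia.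
Qed.

Lemma balanced_opener_lt_closer t : t < size balanced_openers ->
  nth 0 balanced_openers t < nth 0 balanced_closers t.
Proof.
have size_lt : size low_closers <= size low_openers by rewrite !size_filter count_closes_leq.
rewrite !nth_cat size_cat size_rev size_map => t_lt.
case: (ltnP t (size low_closers)) => [t_ltc | t_gec].
  by rewrite (leq_trans t_ltc size_lt) nth_low_opener_lt_closer.
case: (ltnP t (size low_openers)) => [t_lto | t_geo].
  have x_lt := low_openers_lt (mem_nth 0 t_lto).
  have v_lt : t - size low_closers < size (mirror_seq (n + n) low_openers).
    by rewrite size_rev size_map; lia.
  have /andP [le_y _] := mem_mirror_seq_high low_openers_lt (mem_nth 0 v_lt).
  exact: leq_trans x_lt le_y.
rewrite !nth_rev_map; try lia.
set u := size low_openers - (t - size low_closers).+1.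
have -> : size low_closers - (t - size low_openers).+1 = u by rewrite /u; lia.
have u_lt : u < size low_closers by rewrite /u; lia.
have lt_xd : nth 0 low_openers u < nth 0 low_closers u := nth_low_opener_lt_closer u_lt.
have d_lt : nth 0 low_closers u < n := low_closers_lt (mem_nth 0 u_lt).
lia.
Qed.

Lemma no_fixed_under_low_arc f t : f < n ->
  f \notin balanced_openers -> f \notin balanced_closers -> t < size balanced_openers ->
  nth 0 balanced_openers t < f -> f < nth 0 balanced_closers t -> False.
Proof.
move=> f_lt; rewrite !mem_cat !negb_or mem_low_openers mem_low_closers f_lt !andbT.
move=> /andP [f_nP _] /andP [f_ncl _] t_lt x_lt_f f_lt_d.
have bal_f : balance f = 0 by move: f_ncl; rewrite /closes f_nP /=; lia.
have t_ltP : t < size low_openers.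
  rewrite ltnNge; apply/negP => t_ge; move: x_lt_f; rewrite nth_cat (ltnNge t) t_ge /=.
  have v_lt : t - size low_openers < size (mirror_seq (n + n) low_closers).
    by move: t_lt; rewrite /balanced_openers size_cat; lia.
  have /andP [le_y _] : n <= nth 0 (mirror_seq (n + n) low_closers) (t - size low_openers) < n + n.
    exact: mem_mirror_seq_high low_closers_lt (mem_nth 0 v_lt).
  lia.
move: x_lt_f f_lt_d; rewrite !nth_cat t_ltP /low_openers.
rewrite size_filter in t_ltP.
rewrite (nth_filter_iota_lt (ltnW f_lt) t_ltP).
rewrite count_balance bal_f add0n => t_ltcf.
have t_ltc : t < count closes (iota 0 n) by apply: leq_trans t_ltcf (count_iota_leq _ (ltnW f_lt)).
have t_ltcl : t < size low_closers by rewrite size_filter.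
have := nth_filter_iota_lt (ltnW f_lt) t_ltc; rewrite t_ltcf t_ltcl => d_lt_f.
by rewrite ltnNge ltnW.
Qed.

Lemma balanced_no_fixed_under_arc f t : f < n + n ->
  f \notin balanced_openers -> f \notin balanced_closers -> t < size balanced_openers ->
  nth 0 balanced_openers t < f -> f < nth 0 balanced_closers t -> False.
Proof.
move=> f_lt f_xs f_ds t_lt x_lt_f f_lt_d.
have [f_ltn | f_gen] := ltnP f n; first exact: no_fixed_under_low_arc f_xs f_ds t_lt _ _.
have size_ds := size_balanced_closers.
have t_ltd : t < size balanced_closers by rewrite -size_ds.
have d_lt : nth 0 balanced_closers t < n + n := balanced_closers_lt (mem_nth 0 t_ltd).
have x_lt : nth 0 balanced_openers t < n + n := balanced_openers_lt (mem_nth 0 t_lt).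
(* reflection through the centre maps arc t to arc (size - t.+1) and f below n *)
apply: (no_fixed_under_low_arc (f := (n + n).-1 - f) (t := size balanced_openers - t.+1)).
- by lia.
- by rewrite balanced_openers_mirror mem_mirror_seq_sub //; exact: balanced_closers_lt.
- by rewrite balanced_closers_mirror mem_mirror_seq_sub //; exact: balanced_openers_lt.
- by lia.
- rewrite {1}balanced_openers_mirror size_ds nth_mirror_seq //; lia.
- rewrite balanced_closers_mirror nth_mirror_seq //; lia.
Qed.

Lemma arc_diagram_balanced : arc_diagram (n + n) balanced_openers balanced_closers.
Proof.
split.
- apply: sorted_ltn_cat; first exact: sorted_low_openers.
    by apply: sorted_mirror_seq sorted_low_closers => x /low_closers_lt; lia.
  by move=> x y /low_openers_lt x_lt /(mem_mirror_seq_high low_closers_lt) /andP [le_y _]; lia.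
- apply: sorted_ltn_cat; first exact: sorted_low_closers.
    by apply: sorted_mirror_seq sorted_low_openers => x /low_openers_lt; lia.
  by move=> x y /low_closers_lt x_lt /(mem_mirror_seq_high low_openers_lt) /andP [le_y _]; lia.
- exact: size_balanced_closers.
- exact: balanced_openers_lt.
- move=> x; rewrite !mem_cat => /orP [x_lo | x_hc] /orP [x_lc | x_ho].
  + exact: low_openers_closers_disjoint x_lo x_lc.
  + by have := low_openers_lt x_lo; have := mem_mirror_seq_high low_openers_lt x_ho; lia.
  + by have := low_closers_lt x_lc; have := mem_mirror_seq_high low_closers_lt x_hc; lia.
  + move: x_hc x_ho => /mem_mirror_seq [y y_lc ->].
    have y_lt : y < n + n by have := low_closers_lt y_lc; lia.
    rewrite mem_mirror_seq_sub // => [y_lo | z /low_openers_lt]; last by lia.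
    exact: low_openers_closers_disjoint y_lo y_lc.
- exact: balanced_closers_mirror.
- exact: balanced_opener_lt_closer.
- exact: balanced_no_fixed_under_arc.
Qed.

End BalancedArcs.

Section ArcPermutation.

Variables (m : nat) (xs ds : seq nat).
Hypothesis A : arc_diagram m xs ds.

Definition arc_perm_fun (i : 'I_m) : 'I_m := Ordinal (arc_inv_lt A (ltn_ord i)).

Lemma arc_perm_fun_inj : injective arc_perm_fun.
Proof.
move=> i j /(congr1 val) /= /(congr1 (arc_inv xs ds)).
by rewrite !(arc_invK A) => /val_inj.
Qed.

Definition arc_perm : {perm 'I_m} := perm arc_perm_fun_inj.

Lemma arc_permE i : val (arc_perm i) = arc_inv xs ds i.
Proof. by rewrite permE. Qed.

Lemma arc_perm_I321C : arc_perm \in I321C m.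
Proof.
rewrite inE; apply/and3P; split.
- by apply/forallP => i; apply/eqP/val_inj; rewrite !arc_permE (arc_invK A).
- apply/forallP => i; rewrite !arc_permE /=.
  have i_lt := ltn_ord i; have := arc_inv_lt A i_lt.
  rewrite (_ : m - i.+1 = m.-1 - i); last by lia.
  by rewrite (arc_inv_mirror A i_lt); lia.
- apply/negP => /existsP [i /existsP [j /existsP [k /and4P [ij jk]]]].
  by rewrite !arc_permE; exact: (@arc_inv_avoids321 m xs ds A i j k ij jk).
Qed.

Lemma Exc_arc_perm : Exc arc_perm = [set i | val i \in xs].
Proof. by apply/setP => i; rewrite !inE arc_permE (arc_inv_exc A). Qed.

End ArcPermutation.

Definition nat_set n (S : {set 'I_n}) : pred nat := fun i => oapp (mem S) false (insub i).

Lemma nat_set_val n (S : {set 'I_n}) (j : 'I_n) : nat_set S j = (j \in S).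
Proof. by rewrite /nat_set valK. Qed.

Definition involution_of_set n (S : {set 'I_n}) : {perm 'I_(n + n)} :=
  arc_perm (arc_diagram_balanced (nat_set S) n).

Lemma involution_of_set_I321C n (S : {set 'I_n}) : involution_of_set S \in I321C (n + n).
Proof. exact: arc_perm_I321C. Qed.

Lemma Epi_involution_of_set n (S : {set 'I_n}) : Epi (involution_of_set S) = S.
Proof.
apply/setP => j; rewrite inE Exc_arc_perm inE /= mem_cat mem_low_openers nat_set_val ltn_ord.
rewrite andbT; case: (j \in S) => //=; apply/negP.
move=> /(mem_mirror_seq_high (@low_closers_lt (nat_set S) n)).
by have := ltn_ord j; lia.
Qed.

Section I321CProperties.

Variables (m : nat) (p : {perm 'I_m}).
Hypothesis p_I321C : p \in I321C m.

Lemma I321C_involutive : involutive p.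
Proof. by move: p_I321C; rewrite inE => /and3P [/forallP p_inv _ _] i; apply/eqP. Qed.

Lemma I321C_mirror i : val (p (rev_ord i)) = m.-1 - val (p i).
Proof. by move: p_I321C; rewrite inE => /and3P [_ /forallP /(_ i) /eqP p_cs _]; lia. Qed.

Lemma I321C_exc_mirror i : (val (rev_ord i) < val (p (rev_ord i))) = (val (p i) < val i).
Proof. by rewrite I321C_mirror /=; have := ltn_ord i; have := ltn_ord (p i); lia. Qed.

Lemma I321C_avoids321 i j k : val i < val j -> val j < val k ->
  val (p k) < val (p j) -> val (p j) < val (p i) -> False.
Proof.
move: p_I321C; rewrite inE => /and3P [_ _ /negP p_av] ij jk kj ji; apply: p_av.
by apply/existsP; exists i; apply/existsP; exists j; apply/existsP; exists k; apply/and4P.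
Qed.

End I321CProperties.

Lemma Epi_excE n (p q : {perm 'I_(n + n)}) (i : 'I_(n + n)) : Epi p = Epi q -> val i < n ->
  (val i < val (p i)) = (val i < val (q i)).
Proof.
move=> E i_lt; have := congr1 (fun X : {set 'I_n} => Ordinal i_lt \in X) E; rewrite /= !inE.
by rewrite (_ : lshift n (Ordinal i_lt) = i) //; apply: val_inj.
Qed.

Section EpiUniqueness.

Variable n : nat.
Implicit Types (p q : {perm 'I_(n + n)}) (i : 'I_(n + n)).

Lemma agree_below_excedance_nlt p q i : p \in I321C (n + n) -> q \in I321C (n + n) ->
  Epi p = Epi q -> (forall j, val j < val i -> p j = q j) -> val i < n ->
  ~ (val i < val (p i) < val (q i)).
Proof.
move=> p_I q_I E agree i_lt /andP [i_lt_a a_lt_b].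
set a := p i in i_lt_a a_lt_b; set b := q i in a_lt_b.
have pa : p a = i by rewrite /a (I321C_involutive p_I).
have qb : q b = i by rewrite /b (I321C_involutive q_I).
case: (ltngtP (val (q a)) (val a)) => [qa_lt | a_lt_qa | qa_eq].
- set c := q a in qa_lt; have qc : q c = a by rewrite /c (I321C_involutive q_I).
  case: (ltngtP (val c) (val i)) => [c_lt | i_lt_c | /val_inj c_eq].
  + have /(@perm_inj _ p) c_eq : p c = p i by rewrite agree.
    by move: c_lt; rewrite c_eq ltnn.
  + (* positions i < c < b carry the values b > a > i of q *)
    apply: (I321C_avoids321 q_I i_lt_c (ltn_trans qa_lt a_lt_b)); by rewrite ?qb qc.
  + by move: a_lt_b; rewrite /b -c_eq qc ltnn.
- (* a is a deficiency of p but an excedance of q; move it to the first half if needed *)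
  have [a_ltn | a_gen] := ltnP (val a) n.
    by have := Epi_excE E a_ltn; rewrite pa a_lt_qa ltnNge ltnW.
  have ra_lt : val (rev_ord a) < n by move: a_gen; rewrite /=; have := ltn_ord a; lia.
  have := Epi_excE E ra_lt; rewrite !(I321C_exc_mirror p_I, I321C_exc_mirror q_I) pa.
  by rewrite i_lt_a ltnNge ltnW.
- have qa : q a = a by apply: val_inj.
  by apply: (I321C_avoids321 q_I i_lt_a a_lt_b); rewrite ?qb qa.
Qed.

Lemma agree_below_deficiency p q i : p \in I321C (n + n) -> q \in I321C (n + n) ->
  (forall j, val j < val i -> p j = q j) -> val (p i) < val i -> p i = q i.
Proof.
move=> p_I q_I agree /agree; rewrite (I321C_involutive p_I) => e.
by rewrite {2}e (I321C_involutive q_I).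
Qed.

Lemma agree_below_eq p q i : p \in I321C (n + n) -> q \in I321C (n + n) ->
  Epi p = Epi q -> (forall j, val j < val i -> p j = q j) -> p i = q i.
Proof.
move=> p_I q_I E agree.
have [i_lt | i_ge] := ltnP (val i) n; last first.
  have ri_lt : val (rev_ord i) < val i by move: i_ge; rewrite /=; have := ltn_ord i; lia.
  have := I321C_mirror p_I (rev_ord i).
  rewrite rev_ordK (agree _ ri_lt) -(I321C_mirror q_I) rev_ordK.
  exact: val_inj.
have q_agree j (j_lt : val j < val i) : q j = p j := esym (agree j j_lt).
have [pi_lt | pi_ge] := ltnP (val (p i)) (val i); first exact: agree_below_deficiency.
have [qi_lt | qi_ge] := ltnP (val (q i)) (val i).
  exact/esym/agree_below_deficiency.
have exc := Epi_excE E i_lt.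
case: (boolP (val i < val (p i))) => [i_lt_pi | ]; last first.
  rewrite -leqNgt => pi_le; move: exc; rewrite ltnNge pi_le /= => /esym/negbT.
  by rewrite -leqNgt => qi_le; apply: val_inj; move: pi_le pi_ge qi_ge qi_le => /=; lia.
have i_lt_qi : val i < val (q i) by rewrite -exc.
case: (ltngtP (val (p i)) (val (q i))) => [lt_pq | lt_qp | /val_inj //].
- by case: (agree_below_excedance_nlt p_I q_I E agree i_lt); rewrite i_lt_pi.
- by case: (agree_below_excedance_nlt q_I p_I (esym E) q_agree i_lt); rewrite i_lt_qi.
Qed.

Lemma Epi_I321C_inj : {in I321C (n + n) &, injective (@Epi n)}.
Proof.
move=> p q p_I q_I E; apply/permP.
suff agree_below k i : val i < k -> p i = q i by move=> i; apply: (agree_below (val i).+1).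
elim: k i => [// | k IH] i i_lt.
by apply: agree_below_eq => // j j_lt; apply: IH; apply: leq_trans j_lt _; rewrite -ltnS.
Qed.

End EpiUniqueness.

Theorem mainTheorem5 (n : nat) (hn : 1 <= n) :
  [/\ {in I321C (n + n) &, injective (@Epi n)},
      (forall S : {set 'I_n}, exists2 p, p \in I321C (n + n) & Epi p = S)
    & #|I321C (n + n)| = 2 ^ n].
Proof.
have onto S : exists2 p, p \in I321C (n + n) & Epi p = S.
  by exists (involution_of_set S); [exact: involution_of_set_I321C | exact: Epi_involution_of_set].
split=> //; first exact: Epi_I321C_inj.
rewrite -(card_in_imset (@Epi_I321C_inj n)).
have -> : [set Epi p | p in I321C (n + n)] = powerset [set: 'I_n].
  apply/setP => S; rewrite !inE subsetT.
  by have [p p_I <-] := onto S; exact: imset_f.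
by rewrite card_powerset cardsT card_ord.
Qed.
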